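(* Let $F_1,F_2\colon\mathbf{A}\to\mathbf{B}$ be lenses having a coequaliser $E\colon\mathbf{B}\to\mathbf{C}$ in $\mathbf{Lens}$. Then (1) for each lens $G\colon\mathbf{B}\to\mathbf{D}$ with $G\circ F_1=G\circ F_2$, we have $\varphi_{G,B}(d)=\varphi_{E,B}\big(E\,\varphi_{G,B}(d)\big)$ for all objects $B$ of $\mathbf{B}$ and all morphisms $d$ of $\mathbf{D}$ with domain $GB$; and (2) in particular, $E$ is the unique lens with get functor $UE$ that satisfies $E\circ F_1=E\circ F_2$.
   Context: A lens $F\colon \mathbf{A}\to\mathbf{B}$ between small categories consists of a functor $F\colon\mathbf{A}\to\mathbf{B}$ (the get functor) together with, for each object $A$ of $\mathbf{A}$, a function $\varphi_{F,A}$ from the set of morphisms of $\mathbf{B}$ with domain $FA$ to the set of morphisms of $\mathbf{A}$ with domain $A$, such that: $F(\varphi_{F,A}b)=b$; $\varphi_{F,A}(\mathrm{id}_{FA})=\mathrm{id}_A$; and $\varphi_{F,A}(b'\circ b)=\varphi_{F,A'}(b')\circ\varphi_{F,A}(b)$ whenever $b$ has domain $FA$, $A'$ is the codomain of $\varphi_{F,A}b$, and $b'$ has domain $FA'$. $\mathbf{Lens}$ is the category of small categories and lenses, with composite of $F\colon\mathbf{A}\to\mathbf{B}$, $G\colon\mathbf{B}\to\mathbf{C}$ having get functor $G\circ F$ and puts $\varphi_{G\circ F,A}(c)=\varphi_{F,A}(\varphi_{G,FA}(c))$. $U\colon\mathbf{Lens}\to\mathbf{Cat}$ sends a lens to its get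 functor. *)

Set Implicit Arguments.

(* Small categories, presented single-sorted: a type of objects, a type of
   morphisms, domain/codomain maps, identities and a composition operation
   [comp g f] (= g o f), whose laws are only required on composable pairs. *)
Record Cat := {
  Ob : Type;
  Mor : Type;
  dom : Mor -> Ob;
  cod : Mor -> Ob;
  idm : Ob -> Mor;
  comp : Mor -> Mor -> Mor;
  dom_idm : forall x, dom (idm x) = x;
  cod_idm : forall x, cod (idm x) = x;
  dom_comp : forall f g, cod f = dom g -> dom (comp g f) = dom f;
  cod_comp : forall f g, cod f = dom g -> cod (comp g f) = cod g;
  comp_id_l : forall f, comp (idm (cod f)) f = f;
  comp_id_r : forall f, comp f (idm (dom f)) = f;
  comp_assoc : forall f g h, cod f = dom g -> cod g = dom h ->
    comp h (comp g f) = comp (comp h g) f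
}.

Arguments dom {c} _.
Arguments cod {c} _.
Arguments idm {c} _.
Arguments comp {c} _ _.

Record Functor (A B : Cat) := {
  fob : Ob A -> Ob B;
  fmor : Mor A -> Mor B;
  fmor_dom : forall f, dom (fmor f) = fob (dom f);
  fmor_cod : forall f, cod (fmor f) = fob (cod f);
  fmor_id : forall x, fmor (idm x) = idm (fob x);
  fmor_comp : forall f g, cod f = dom g -> fmor (comp g f) = comp (fmor g) (fmor f)
}.

Arguments fob {A B} _ _.
Arguments fmor {A B} _ _.

(* A lens: get functor plus put functions phi_A, defined on morphisms of B
   with domain F A (the value of [put A b] for other [b] is irrelevant). *)
Record Lens (A B : Cat) := {
  get : Functor A B;
  put : Ob A -> Mor B -> Mor A;
  put_dom : forall a b, dom b = fob get a -> dom (put a b) = a;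
  put_get : forall a b, dom b = fob get a -> fmor get (put a b) = b;
  put_id : forall a, put a (idm (fob get a)) = idm a;
  put_comp : forall a b b', dom b = fob get a ->
    dom b' = fob get (cod (put a b)) ->
    put a (comp b' b) = comp (put (cod (put a b)) b') (put a b)
}.

Arguments get {A B} _.
Arguments put {A B} _ _ _.

Definition lens_eq {A B : Cat} (L1 L2 : Lens A B) : Prop :=
  (forall a, fob (get L1) a = fob (get L2) a) /\
  (forall f, fmor (get L1) f = fmor (get L2) f) /\
  (forall a b, dom b = fob (get L1) a -> put L1 a b = put L2 a b).

Definition same_get {A B : Cat} (L1 L2 : Lens A B) : Prop :=
  (forall a, fob (get L1) a = fob (get L2) a) /\
  (forall f, fmor (get L1) f = fmor (get L2) f).

Definition functor_comp {A B C : Cat} (F : Functor A B) (G : Functor B C)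
  : Functor A C.
Proof.
  refine {| fob := fun a => fob G (fob F a);
            fmor := fun f => fmor G (fmor F f) |}.
  - intros f. rewrite fmor_dom, fmor_dom. reflexivity.
  - intros f. rewrite fmor_cod, fmor_cod. reflexivity.
  - intros x. rewrite fmor_id, fmor_id. reflexivity.
  - intros f g H. rewrite fmor_comp by exact H.
    rewrite fmor_comp; [reflexivity|]. rewrite fmor_cod, fmor_dom, H. reflexivity.
Defined.

Definition lens_comp {A B C : Cat} (F : Lens A B) (G : Lens B C) : Lens A C.
Proof.
  refine {| get := functor_comp (get F) (get G);
            put := fun a c => put F a (put G (fob (get F) a) c) |}.
  - simpl. intros a c H. apply put_dom. apply put_dom. exact H.
  - simpl. intros a c H. rewrite put_get. apply put_get. exact H.
    apply put_dom. exact H.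
  - simpl. intros a. rewrite put_id. apply put_id.
  - simpl. intros a c c' Hc Hc'.
    set (b := put G (fob (get F) a) c).
    assert (Hb : dom b = fob (get F) a) by (apply put_dom; exact Hc).
    set (a' := cod (put F a b)).
    assert (Ha' : fob (get F) a' = cod b).
    { unfold a'. rewrite <- fmor_cod. rewrite put_get by exact Hb. reflexivity. }
    assert (Hc'' : dom c' = fob (get G) (cod b)) by (rewrite <- Ha'; exact Hc').
    rewrite (put_comp G (fob (get F) a) c c' Hc).
    fold b. rewrite <- Ha'.
    apply put_comp. exact Hb.
    rewrite put_dom. reflexivity. rewrite Ha'. exact Hc''. exact Hc''.
Defined.

Definition is_coequaliser {A B C : Cat} (F1 F2 : Lens A B) (E : Lens B C) : Prop :=
  lens_eq (lens_comp F1 E) (lens_comp F2 E) /\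
  forall (D : Cat) (G : Lens B D),
    lens_eq (lens_comp F1 G) (lens_comp F2 G) ->
    exists K : Lens C D,
      lens_eq (lens_comp E K) G /\
      (forall K' : Lens C D, lens_eq (lens_comp E K') G -> lens_eq K' K).


(* A lens that factors as [K o E] has puts that are themselves puts of [E]:
   [put_{K o E} b d] is [put_E b] applied to its own image under [E].
   Hence a coequalising [G], factoring through the coequaliser [E], has this
   property; and a lens with the same get as [E] and this property has the
   puts of [E], since then [E (put_G b d) = G (put_G b d) = d]. *)

Lemma put_lens_comp_eq_put_get {B C D : Cat} (E : Lens B C) (K : Lens C D)
    (b : Ob B) (d : Mor D) :
  dom d = fob (get K) (fob (get E) b) ->
  put (lens_comp E K) b d =
  put E b (fmor (get E) (put (lens_comp E K) b d)).
Proof.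
  intros Hd. simpl.
  rewrite put_get; [reflexivity|].
  apply put_dom. exact Hd.
Qed.

Lemma put_factor_eq_put_get {B C D : Cat} (E : Lens B C) (K : Lens C D)
    (G : Lens B D) (b : Ob B) (d : Mor D) :
  lens_eq (lens_comp E K) G -> dom d = fob (get G) b ->
  put G b d = put E b (fmor (get E) (put G b d)).
Proof.
  intros [Hob [_ Hput]] Hd.
  assert (HdEK : dom d = fob (get (lens_comp E K)) b) by (rewrite Hob; exact Hd).
  rewrite <- (Hput b d HdEK).
  exact (put_lens_comp_eq_put_get E K b d HdEK).
Qed.

Lemma coequaliser_put_eq_put_get {A B C D : Cat} (F1 F2 : Lens A B)
    (E : Lens B C) (G : Lens B D) (b : Ob B) (d : Mor D) :
  is_coequaliser F1 F2 E ->
  lens_eq (lens_comp F1 G) (lens_comp F2 G) ->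
  dom d = fob (get G) b ->
  put G b d = put E b (fmor (get E) (put G b d)).
Proof.
  intros [_ Huniv] HG Hd.
  destruct (Huniv D G HG) as [K [HEK _]].
  exact (put_factor_eq_put_get E K G b d HEK Hd).
Qed.

Lemma lens_eq_of_same_get_put_eq_put_get {B C : Cat} (E E' : Lens B C) :
  same_get E' E ->
  (forall (b : Ob B) (c : Mor C), dom c = fob (get E') b ->
     put E' b c = put E b (fmor (get E) (put E' b c))) ->
  lens_eq E' E.
Proof.
  intros [Hob Hmor] Hput.
  split; [exact Hob|]. split; [exact Hmor|].
  intros b c Hc.
  rewrite (Hput b c Hc), <- Hmor, put_get by exact Hc.
  reflexivity.
Qed.

Theorem proposition4p1 (A B C : Cat) (F1 F2 : Lens A B) (E : Lens B C) :
  is_coequaliser F1 F2 E ->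
  (forall (D : Cat) (G : Lens B D),
      lens_eq (lens_comp F1 G) (lens_comp F2 G) ->
      forall (b : Ob B) (d : Mor D), dom d = fob (get G) b ->
        put G b d = put E b (fmor (get E) (put G b d)))
  /\
  (forall E' : Lens B C,
      same_get E' E ->
      lens_eq (lens_comp F1 E') (lens_comp F2 E') ->
      lens_eq E' E).
Proof.
  intros Hcoeq. split.
  - intros D G HG b d Hd.
    exact (coequaliser_put_eq_put_get F1 F2 E G b d Hcoeq HG Hd).
  - intros E' Hget HE'.
    apply (lens_eq_of_same_get_put_eq_put_get E E' Hget).
    intros b c Hc.
    exact (coequaliser_put_eq_put_get F1 F2 E E' b c Hcoeq HE' Hc).
Qed.
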